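(* Let $G=(V,E)$ be a graph and let $\alpha$ be the cardinality of a maximum independent set of $G$. For any edge weight $w$ and vertex measure $\mu$ on $G$, $$\alpha\le\min_{\sigma}\#\{k: L_k(\Gamma^\sigma)=0\},$$ where the minimum is over all signatures $\sigma:E\to\{+1,-1\}$ and $\Gamma^\sigma=(G,\sigma)$ (with the given $w$ and $\mu$).
   Context: $G=(V,E)$ is a finite undirected graph without self-loops, $V=\{1,\dots,n\}$. A signed graph $(G,\sigma)$ has signature $\sigma:E\to\{\pm1\}$, edge weight $w:E\to(0,\infty)$, vertex measure $\mu:V\to(0,\infty)$, potential $\kappa:V\to\mathbb R$. For $p\ge1$ and nonzero $f$, $\mathcal R_p^\sigma(f)=\frac{\sum_{\{i,j\}\in E}w_{ij}|f(i)-\sigma_{ij}f(j)|^p+\sum_i\kappa_i|f(i)|^p}{\sum_i\mu_i|f(i)|^p}$; $\mathcal S_p=\{f:\sum_i\mu_i|f(i)|^p=1\}$; Krasnoselskii genus $\gamma(B)$ of closed symmetric $B\subset\mathbb R^n\setminus\{0\}$: least $k$ with an odd continuous map $B\to\mathbb R^k\setminus\{0\}$; $\mathcal F_k(\mathcal S_p)$ = closed symmetric $B\subset\mathcal S_p$ with $\gamma(B)\ge k$; $\lambda_k^{(p)}=\min_{B\in\mathcal F_k(\mathcal S_p)}\max_{f\in B}\mathcal R_p^\sigma(f)$. Cut-off adjacency eigenvalues: $L_k(\Gamma):=\lim_{p\to\infty}2^{-p}\lambda_k^{(p)}(\Gamma)$, $k=1,\dots,n$ (limits exist, are nonnegative and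 independent of $\kappa$). *)

From HB Require Import structures.
From mathcomp Require Import all_boot all_order all_algebra.
From mathcomp Require Import all_classical all_reals all_analysis.
Set Implicit Arguments. Unset Strict Implicit. Unset Printing Implicit Defensive.
Import Order.TTheory GRing.Theory Num.Theory.
Import numFieldNormedType.Exports.
Local Open Scope classical_set_scope.
Local Open Scope ring_scope.

(* Vertices are 'I_n (i.e. {0,...,n-1} standing for {1,...,n}); the graph is a
   symmetric irreflexive relation e; each undirected edge {i,j} is counted once,
   as the ordered pair (i,j) with i < j.  A signature is encoded by a boolean
   function on pairs: sg (i,j) = true means sigma_ij = -1, false means +1
   (only the values on edges (i,j), i<j, matter). *)

Definition sgnb (R : realType) (b : bool) : R := if b then -1 else 1.

Definition rq_num (R : realType) (n : nat) (e : rel 'I_n)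
  (w : 'I_n -> 'I_n -> R) (sg : {ffun 'I_n * 'I_n -> bool})
  (kappa : 'I_n -> R) (p : R) (f : 'rV[R]_n) : R :=
  \sum_(i : 'I_n) \sum_(j : 'I_n | (i < j)%N && e i j)
      w i j * `|f 0 i - sgnb R (sg (i, j)) * f 0 j| `^ p
  + \sum_(i : 'I_n) kappa i * `|f 0 i| `^ p.

Definition rq_den (R : realType) (n : nat) (mu : 'I_n -> R) (p : R)
  (f : 'rV[R]_n) : R :=
  \sum_(i : 'I_n) mu i * `|f 0 i| `^ p.

Definition rayleigh (R : realType) (n : nat) (e : rel 'I_n)
  (w : 'I_n -> 'I_n -> R) (sg : {ffun 'I_n * 'I_n -> bool})
  (kappa mu : 'I_n -> R) (p : R) (f : 'rV[R]_n) : R :=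
  rq_num e w sg kappa p f / rq_den mu p f.

Definition Sp (R : realType) (n : nat) (mu : 'I_n -> R) (p : R) : set 'rV[R]_n :=
  [set f | rq_den mu p f = 1].

Definition symmetric_set (R : realType) (n : nat) (B : set 'rV[R]_n) : Prop :=
  forall f, B f -> B (- f).

(* Krasnoselskii genus: gamma(B) >= k, i.e. for no j < k is there an odd
   continuous map B -> R^j \ {0}  (so gamma(B) = least such j, +infinity if none,
   and gamma(empty) = 0). *)
Definition genus_ge (R : realType) (n : nat) (B : set 'rV[R]_n) (k : nat) : Prop :=
  forall j : nat, (j < k)%N ->
    ~ (exists g : 'rV[R]_n -> 'rV[R]_j,
         {within B, continuous g} /\
         (forall x, B x -> g (- x) = - g x) /\
         (forall x, B x -> g x != 0)).

Definition Fk (R : realType) (n : nat) (mu : 'I_n -> R) (p : R) (k : nat)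
  : set (set 'rV[R]_n) :=
  [set B | [/\ B `<=` Sp mu p, closed B, symmetric_set B & genus_ge B k]].

(* lambda_k^(p) = min_{B in F_k} max_{f in B} R_p(f)  (min/max are attained;
   written as inf/sup) *)
Definition lambda_p (R : realType) (n : nat) (e : rel 'I_n)
  (w : 'I_n -> 'I_n -> R) (sg : {ffun 'I_n * 'I_n -> bool})
  (kappa mu : 'I_n -> R) (k : nat) (p : R) : R :=
  inf [set sup [set rayleigh e w sg kappa mu p f | f in B] | B in Fk mu p k].

Definition Lk (R : realType) (n : nat) (e : rel 'I_n)
  (w : 'I_n -> 'I_n -> R) (sg : {ffun 'I_n * 'I_n -> bool})
  (kappa mu : 'I_n -> R) (k : nat) : R :=
  lim ((2 `^ (- p) * lambda_p e w sg kappa mu k p) @[p --> +oo]).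

Definition num_zero_Lk (R : realType) (n : nat) (e : rel 'I_n)
  (w : 'I_n -> 'I_n -> R) (sg : {ffun 'I_n * 'I_n -> bool})
  (kappa mu : 'I_n -> R) : nat :=
  #|[set k : 'I_n | Lk e w sg kappa mu k.+1 == 0]|.

Definition independent (n : nat) (e : rel 'I_n) (S : {set 'I_n}) : bool :=
  [forall i in S, forall j in S, ~~ e i j].

Definition indep_number (n : nat) (e : rel 'I_n) : nat :=
  \max_(S : {set 'I_n} | independent e S) #|S|.

From HB Require Import structures.
From mathcomp Require Import all_boot all_order all_algebra.
From mathcomp Require Import all_classical all_reals all_analysis.
Set Implicit Arguments. Unset Strict Implicit. Unset Printing Implicit Defensive.
Import Order.TTheory GRing.Theory Num.Theory.
Import numFieldNormedType.Exports.
Local Open Scope classical_set_scope.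
Local Open Scope ring_scope.

(* Fix a signature and an independent set S, and let m = n - |S|.  On the part
   Sp_on S of the p-sphere supported in S, every edge has an endpoint where f
   vanishes, so the Rayleigh quotient lies between -sum_i |kappa_i|/mu_i and
   sum_ij w_ij (1/mu_i + 1/mu_j) + sum_i |kappa_i|/mu_i, uniformly in p.  Hence
   lambda_k^(p) stays bounded, and L_k = 0, whenever Sp_on S has genus >= k.
   An odd map Sp_on S -> R^j \ 0, extended conically in the S-coordinates and
   paired with the m remaining coordinates, is an odd map R^n \ 0 -> R^(j+m) \ 0;
   so genus(Sp_on S) >= genus(R^n \ 0) - m.  Thus L_k = 0 for each k <= |S| with
   genus(R^n \ 0) >= k + m, and also for each k with genus(R^n \ 0) < k, since
   then F_k is empty.  These two ranges provide |S| distinct indices, without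
   computing genus(R^n \ 0) = n (Borsuk-Ulam). *)

Lemma continuous_powR_norm (R : realType) (p : R) : 0 < p ->
  continuous (fun y : R => `|y| `^ p).
Proof.
move=> p0 y; have [->|y0] := eqVneq y 0; last first.
  apply: (@continuous_comp _ _ _ (fun y : R => `|y|) (fun a => a `^ p)).
    exact: norm_continuous.
  apply/differentiable_continuous/derivable1_diffP/derivable_powR.
  by rewrite in_itv /= normr_gt0 y0.
rewrite /continuous_at normr0 powR0 ?gt_eqF//.
apply/cvgrPdist_lt => e e0.
have e1 : 0 < e `^ p^-1 by rewrite powR_gt0.
have /cvgrPdist_lt/(_ _ e1) := @cvg_id _ (nbhs (0 : R^o)).
apply: filterS => z; rewrite !sub0r !normrN => ze; rewrite ger0_norm ?powR_ge0//.
have -> : e = (e `^ p^-1) `^ p by rewrite -powRrM mulVf ?gt_eqF// powRr1 // ltW.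
by rewrite gt0_ltr_powR// nnegrE ltW.
Qed.

Lemma continuous_at_mx (R : realType) (T : topologicalType) (m k : nat)
  (F : T -> 'M[R]_(m, k)) (x : T) :
  (forall i j, {for x, continuous (fun y => F y i j)}) -> {for x, continuous F}.
Proof.
move=> Fc; apply/cvgrPdist_lt => e e0.
have : \forall y \near x, forall ij : 'I_m * 'I_k,
    `|F x ij.1 ij.2 - F y ij.1 ij.2| < e.
  by apply: filter_forall => -[i j]; have /cvgrPdist_lt := Fc i j; apply.
apply: filterS => y Fy; rewrite [X in X < _]/Num.norm /= mx_normrE.
by apply: bigmax_lt => // ij _; rewrite !mxE.
Qed.

Lemma continuous_at_row_mx (R : realType) (T : topologicalType) (m1 m2 : nat)
  (A : T -> 'rV[R]_m1) (B : T -> 'rV[R]_m2) (x : T) :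
  {for x, continuous A} -> {for x, continuous B} ->
  {for x, continuous (fun y => row_mx (A y) (B y))}.
Proof.
move=> Ac Bc; apply: continuous_at_mx => i t.
case: (split_ordP t) => t' ->.
  have -> : (fun y => row_mx (A y) (B y) i (lshift m2 t')) = (fun M => M i t') \o A.
    by apply/funext => y; rewrite row_mxEl.
  apply: (@continuous_comp _ _ _ A (fun M : 'rV[R]_m1 => M i t')) => //.
  exact: coord_continuous.
have -> : (fun y => row_mx (A y) (B y) i (rshift m1 t')) = (fun M => M i t') \o B.
  by apply/funext => y; rewrite row_mxEr.
apply: (@continuous_comp _ _ _ B (fun M : 'rV[R]_m2 => M i t')) => //.
exact: coord_continuous.
Qed.

Lemma continuous_at_comp_within {T U V : topologicalType} (h : T -> U) (g : U -> V)
  (B : set U) (x : T) :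
  {for x, continuous h} -> (\forall y \near x, B (h y)) -> B (h x) ->
  {within B, continuous g} -> {for x, continuous (g \o h)}.
Proof.
move=> hc Bh Bhx /subspace_continuousP gc.
apply: cvg_comp (gc _ Bhx) => P /hc; rewrite /= !nbhs_simpl => hP.
by apply: filterS2 hP Bh => y /= Py Bhy; apply: Py.
Qed.

Lemma continuous_rq_den (R : realType) (n : nat) (mu : 'I_n -> R) (p : R) :
  0 < p -> continuous (rq_den mu p).
Proof.
move=> p0; apply: continuous_big; first exact: add_continuous.
move=> i _.
have powc : continuous (fun f : 'rV[R]_n => `|f 0 i| `^ p).
  move=> f.
  apply: (@continuous_comp _ _ _ (fun g : 'rV[R]_n => g 0 i) (fun a : R => `|a| `^ p)).
    exact: coord_continuous.
  exact: continuous_powR_norm.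
by move=> f; exact: (@cvgMl_tmp _ _ (nbhs f) _ _ (mu i) _ (powc f)).
Qed.

Lemma powR2N_cvg0 (R : realType) : (2 : R) `^ (- p) @[p --> +oo] --> 0.
Proof.
have -> : (fun p : R => 2 `^ (- p)) = (fun x => expR (- x)) \o (fun p => p * ln 2).
  by apply/funext => p /=; rewrite /powR pnatr_eq0 /= mulNr.
apply: cvg_comp; last exact: cvgr_expR.
by apply: gt0_cvgMly; [rewrite ln_gt0 // ltr1n | exact: cvg_id].
Qed.

Lemma lim_powR2N_mul_bounded (R : realType) (f : R -> R) (M : R) :
  (\forall p \near +oo, `|f p| <= M) ->
  lim ((2 `^ (- p) * f p) @[p --> +oo]) = 0.
Proof.
move=> fM; apply: cvg_lim; first exact: norm_hausdorff.
apply/cvgrPdist_lt => e e0.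
have M1 : 0 < `|M| + 1 by rewrite ltr_wpDl.
have /cvgrPdist_lt/(_ (e / (`|M| + 1))) := @powR2N_cvg0 R.
rewrite divr_gt0 // => /(_ isT) small.
near=> p.
rewrite sub0r normrN normrM ger0_norm ?powR_ge0 //.
have pe : 2 `^ (- p) < e / (`|M| + 1).
  by rewrite -[2 `^ _]ger0_norm ?powR_ge0 // -normrN -sub0r; near: p.
have fp : `|f p| <= `|M| + 1.
  have : `|f p| <= M by near: p.
  by move/le_trans; apply; rewrite (le_trans (ler_norm M)) // lerDl.
have -> : e = e / (`|M| + 1) * (`|M| + 1) by rewrite divfK // gt_eqF.
by apply: le_lt_trans (ler_wpM2l (powR_ge0 _ _) fp) _; rewrite ltr_pM2r.
Unshelve. all: by end_near.
Qed.

Lemma genus_ge_subset (R : realType) (n : nat) (A B : set 'rV[R]_n) (k : nat) :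
  A `<=` B -> genus_ge A k -> genus_ge B k.
Proof.
move=> AB gA j jk [g [gc [godd gnz]]]; apply: (gA j jk); exists g; split.
  exact: continuous_subspaceW AB gc.
by split => x Ax; [exact: godd (AB _ Ax) | exact: gnz (AB _ Ax)].
Qed.

Lemma genus_ge_le (R : realType) (n : nat) (B : set 'rV[R]_n) (k k' : nat) :
  (k' <= k)%N -> genus_ge B k -> genus_ge B k'.
Proof. by move=> kk gB j jk; apply: gB; exact: leq_trans jk kk. Qed.

Lemma genus_ge_nonempty (R : realType) (n : nat) (B : set 'rV[R]_n) (k : nat) :
  (0 < k)%N -> genus_ge B k -> B !=set0.
Proof.
move=> k0 gB; apply/set0P/negP => /eqP B0.
apply: (gB 0%N k0); exists (fun _ => 0); rewrite B0.
by split; [exact: continuous_subspace0 | split].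
Qed.

Section Denominator.
Variables (R : realType) (n : nat) (mu : 'I_n -> R) (p : R).
Implicit Types f : 'rV[R]_n.

Lemma rq_den0 : p != 0 -> rq_den mu p 0 = 0.
Proof.
by move=> p0; rewrite /rq_den big1 // => i _; rewrite mxE normr0 powR0 // mulr0.
Qed.

Lemma rq_denN f : rq_den mu p (- f) = rq_den mu p f.
Proof. by apply: eq_bigr => i _; rewrite mxE normrN. Qed.

Lemma rq_denZ (c : R) f : rq_den mu p (c *: f) = `|c| `^ p * rq_den mu p f.
Proof.
rewrite /rq_den mulr_sumr; apply: eq_bigr => i _.
by rewrite mxE normrM powRM // mulrCA.
Qed.

Hypothesis mu_gt0 : forall i, 0 < mu i.

Lemma rq_den_gt0 f : f != 0 -> 0 < rq_den mu p f.
Proof.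
move=> f0; have [i fi] : exists i, f 0 i != 0.
  apply/existsP; apply: contraNT f0 => /existsPn f0.
  by apply/eqP/rowP => i; rewrite mxE; apply/eqP; rewrite -[_ == _]negbK f0.
rewrite /rq_den (bigD1 i) //= ltr_pwDl ?mulr_gt0 ?powR_gt0 ?normr_gt0 //.
by apply: sumr_ge0 => l _; rewrite mulr_ge0 ?powR_ge0 // ltW.
Qed.

Lemma Sp_powR_le f i : Sp mu p f -> `|f 0 i| `^ p <= (mu i)^-1.
Proof.
rewrite /Sp /= => f1; rewrite -[X in _ <= X]mulr1 ler_pdivlMl // -f1.
rewrite /rq_den (bigD1 i) //= lerDl sumr_ge0 // => l _.
by rewrite mulr_ge0 ?powR_ge0 // ltW.
Qed.

End Denominator.

Lemma Fk_genus_ge_punctured (R : realType) (n : nat) (mu : 'I_n -> R) (p : R)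
  (k : nat) (B : set 'rV[R]_n) :
  p != 0 -> Fk mu p k B -> genus_ge (~` [set 0] : set 'rV[R]_n) k.
Proof.
move=> p0 [BS _ _]; apply: genus_ge_subset => f /BS; rewrite /Sp /= => f1 f0.
by move: f1; rewrite f0 rq_den0 // => /esym/eqP; rewrite oner_eq0.
Qed.

(* Here F_k is empty and lambda_k^(p) is the junk value [inf set0 = 0]. *)
Lemma Lk_eq0_of_not_genus_ge (R : realType) (n : nat) (e : rel 'I_n)
  (w : 'I_n -> 'I_n -> R) (sg : {ffun 'I_n * 'I_n -> bool})
  (kappa mu : 'I_n -> R) (k : nat) :
  ~ genus_ge (~` [set 0] : set 'rV[R]_n) k -> Lk e w sg kappa mu k = 0.
Proof.
move=> ng; rewrite /Lk; apply: cvg_lim; first exact: norm_hausdorff.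
apply: cvg_near_cst; near=> p.
have p0 : p != 0.
  by apply: lt0r_neq0; near: p; apply: nbhs_pinfty_gt; exact: num_real.
rewrite /lambda_p.
suff -> : [set sup [set rayleigh e w sg kappa mu p f | f in B] | B in Fk mu p k] = set0.
  by rewrite inf0 mulr0.
by apply/seteqP; split => // x [B /(Fk_genus_ge_punctured p0)].
Unshelve. all: by end_near.
Qed.

Definition Sp_on (R : realType) (n : nat) (mu : 'I_n -> R) (p : R)
  (S : {set 'I_n}) : set 'rV[R]_n :=
  Sp mu p `&` \bigcap_(i in [set i | i \notin S]) [set f | f 0 i = 0].

Section SupportedSphere.
Variables (R : realType) (n : nat) (mu : 'I_n -> R) (p : R) (S : {set 'I_n}).
Hypothesis p_gt0 : 0 < p.

Lemma closed_Sp_on : closed (Sp_on mu p S).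
Proof.
apply: closedI.
  apply: (@preimage_closed _ _ (rq_den mu p) [set 1]); last exact: closed_eq.
  by move=> f _; exact: continuous_rq_den.
apply: closed_bigI => i _.
apply: (@preimage_closed _ _ (fun f : 'rV[R]_n => f 0 i) [set 0]); last exact: closed_eq.
by move=> f _; exact: coord_continuous.
Qed.

Lemma Sp_onN : symmetric_set (Sp_on mu p S).
Proof.
move=> f [f1 fS]; split; first by rewrite /Sp /= rq_denN.
by move=> i /fS /= fi; rewrite mxE fi oppr0.
Qed.

Lemma Fk_Sp_on (k : nat) : genus_ge (Sp_on mu p S) k -> Fk mu p k (Sp_on mu p S).
Proof. by split; [move=> f [] | exact: closed_Sp_on | exact: Sp_onN |]. Qed.

End SupportedSphere.

Definition potential_bound (R : realType) (n : nat) (kappa mu : 'I_n -> R) : R :=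
  \sum_i `|kappa i| / mu i.

Definition edge_bound (R : realType) (n : nat) (e : rel 'I_n)
  (w : 'I_n -> 'I_n -> R) (mu : 'I_n -> R) : R :=
  \sum_(i : 'I_n) \sum_(j : 'I_n | (i < j)%N && e i j) w i j * ((mu i)^-1 + (mu j)^-1).

Section RayleighBounds.
Variables (R : realType) (n : nat) (e : rel 'I_n) (w : 'I_n -> 'I_n -> R)
  (sg : {ffun 'I_n * 'I_n -> bool}) (kappa mu : 'I_n -> R).
Hypotheses (w_gt0 : forall i j, e i j -> 0 < w i j) (mu_gt0 : forall i, 0 < mu i).

Let edge_sum_ge0 (F : 'I_n -> 'I_n -> R) : (forall i j, 0 <= F i j) ->
  0 <= \sum_(i : 'I_n) \sum_(j : 'I_n | (i < j)%N && e i j) w i j * F i j.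
Proof.
move=> F0; apply: sumr_ge0 => i _; apply: sumr_ge0 => j /andP[_ eij].
by rewrite mulr_ge0 // ltW // w_gt0.
Qed.

Lemma potential_bound_ge0 : 0 <= potential_bound kappa mu.
Proof. by apply: sumr_ge0 => i _; rewrite divr_ge0 // ltW. Qed.

Lemma edge_bound_ge0 : 0 <= edge_bound e w mu.
Proof. by apply: edge_sum_ge0 => i j; rewrite addr_ge0 // invr_ge0 ltW. Qed.

Lemma potential_term_le (p : R) (f : 'rV[R]_n) : Sp mu p f ->
  `|\sum_i kappa i * `|f 0 i| `^ p| <= potential_bound kappa mu.
Proof.
move=> f1; apply: (le_trans (ler_norm_sum _ _ _)); apply: ler_sum => i _.
rewrite normrM (ger0_norm (powR_ge0 _ _)) ler_wpM2l //.
exact: Sp_powR_le.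
Qed.

Lemma rq_num_ge (p : R) (f : 'rV[R]_n) : Sp mu p f ->
  - potential_bound kappa mu <= rq_num e w sg kappa p f.
Proof.
move=> /potential_term_le; rewrite ler_norml => /andP[lb _].
by rewrite /rq_num (le_trans lb) // lerDr edge_sum_ge0 // => i j; rewrite powR_ge0.
Qed.

(* Every edge has an endpoint outside S, where f vanishes. *)
Lemma rq_num_le_indep (p : R) (S : {set 'I_n}) (f : 'rV[R]_n) :
  0 < p -> independent e S -> Sp_on mu p S f ->
  rq_num e w sg kappa p f <= edge_bound e w mu + potential_bound kappa mu.
Proof.
move=> p0 /forallP indS [f1 fS].
rewrite /rq_num lerD //; last by have /ler_normlP[] := potential_term_le f1.
apply: ler_sum => i _; apply: ler_sum => j /andP[_ eij].
apply: ler_wpM2l; first exact/ltW/w_gt0.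
have edge_le :
    `|f 0 i - sgnb R (sg (i, j)) * f 0 j| `^ p <= `|f 0 i| `^ p + `|f 0 j| `^ p.
  have [iS|iS] := boolP (i \in S); last first.
    have sg1 : `|sgnb R (sg (i, j))| = 1 by case: (sg (i, j)); rewrite ?normrN normr1.
    by rewrite (fS i iS) sub0r normrN normrM sg1 mul1r normr0 powR0 ?add0r // gt_eqF.
  have [jS|jS] := boolP (j \in S).
    by have /implyP/(_ iS)/forallP/(_ j)/implyP/(_ jS) := indS i; rewrite eij.
  by rewrite (fS j jS) mulr0 subr0 normr0 powR0 ?addr0 // gt_eqF.
by rewrite (le_trans edge_le) // lerD // Sp_powR_le.
Qed.

Lemma lambda_p_bounded (p : R) (k : nat) (S : {set 'I_n}) :
  0 < p -> (0 < k)%N -> independent e S -> genus_ge (Sp_on mu p S) k ->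
  `|lambda_p e w sg kappa mu k p| <= edge_bound e w mu + potential_bound kappa mu.
Proof.
move=> p0 k0 indS gS.
pose values B := [set rayleigh e w sg kappa mu p f | f in B].
set E := [set sup (values B) | B in Fk mu p k].
have rayleighE f : Sp mu p f -> rayleigh e w sg kappa mu p f = rq_num e w sg kappa p f.
  by rewrite /rayleigh /Sp /= => ->; rewrite divr1.
have E_S : E (sup (values (Sp_on mu p S))) by exists (Sp_on mu p S); first exact: Fk_Sp_on.
have supS : sup (values (Sp_on mu p S)) <= edge_bound e w mu + potential_bound kappa mu.
  apply: ge_sup => [|_ [f Sf <-]].
    by have [f Sf] := genus_ge_nonempty k0 gS; exists (rayleigh e w sg kappa mu p f), f.
  by rewrite rayleighE ?(rq_num_le_indep p0 indS Sf) //; case: Sf.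
have lbE : lbound E (- potential_bound kappa mu).
  move=> _ [B [BS _ _ gB] <-].
  have [f Bf] := genus_ge_nonempty k0 gB.
  have [[_ supB]|/sup_out ->] := pselect (has_sup (values B)).
    rewrite (le_trans (rq_num_ge (BS _ Bf))) // -rayleighE; last exact: BS.
    by apply: (ub_le_sup supB); exists f.
  by rewrite oppr_le0 potential_bound_ge0.
rewrite /lambda_p -/E ler_norml; apply/andP; split.
  rewrite (le_trans _ (lb_le_inf _ lbE)) ?lerN2 ?lerDr ?edge_bound_ge0 //.
  by exists (sup (values (Sp_on mu p S))).
by apply: le_trans supS; apply: (ge_inf _ E_S); exists (- potential_bound kappa mu).
Qed.

Lemma Lk_eq0_of_genus_ge_Sp_on (k : nat) (S : {set 'I_n}) :
  (0 < k)%N -> independent e S -> (forall p, 0 < p -> genus_ge (Sp_on mu p S) k) ->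
  Lk e w sg kappa mu k = 0.
Proof.
move=> k0 indS gS.
apply: (lim_powR2N_mul_bounded (M := edge_bound e w mu + potential_bound kappa mu)).
near=> p; have p0 : 0 < p by near: p; apply: nbhs_pinfty_gt; exact: num_real.
exact: lambda_p_bounded p0 k0 indS (gS p p0).
Unshelve. all: by end_near.
Qed.

End RayleighBounds.

Definition Sp_normalize (R : realType) (n : nat) (mu : 'I_n -> R) (p : R)
  (f : 'rV[R]_n) : 'rV[R]_n :=
  rq_den mu p f `^ (- p^-1) *: f.

Definition restrict (R : nmodType) (n : nat) (S : {set 'I_n}) (f : 'rV[R]_n)
  : 'rV[R]_n :=
  \row_i (if i \in S then f 0 i else 0).

Section Normalization.
Variables (R : realType) (n : nat) (mu : 'I_n -> R) (p : R).
Hypotheses (p_gt0 : 0 < p) (mu_gt0 : forall i, 0 < mu i).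

Lemma Sp_normalizeN (f : 'rV[R]_n) : Sp_normalize mu p (- f) = - Sp_normalize mu p f.
Proof. by rewrite /Sp_normalize rq_denN scalerN. Qed.

Lemma Sp_Sp_normalize (f : 'rV[R]_n) : f != 0 -> Sp mu p (Sp_normalize mu p f).
Proof.
move=> f0; have d0 := rq_den_gt0 p mu_gt0 f0.
rewrite /Sp /= rq_denZ ger0_norm ?powR_ge0 // -powRrM mulNr mulVf ?gt_eqF //.
by rewrite powR_inv1 ?mulVf ?gt_eqF // ltW.
Qed.

Lemma continuous_Sp_normalize (f : 'rV[R]_n) : f != 0 ->
  {for f, continuous (Sp_normalize mu p)}.
Proof.
move=> f0; apply: continuousZ; last exact: cvg_id.
apply: (@continuous_comp _ _ _ (rq_den mu p) (fun a => a `^ (- p^-1))).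
  exact: continuous_rq_den.
apply/differentiable_continuous/derivable1_diffP/derivable_powR.
by rewrite in_itv /= andbT rq_den_gt0.
Qed.

End Normalization.

Section Restriction.
Variables (R : realType) (n : nat) (S : {set 'I_n}).
Implicit Types f : 'rV[R]_n.

Lemma restrictN f : restrict S (- f) = - restrict S f.
Proof. by apply/rowP => i; rewrite !mxE; case: ifP; rewrite ?oppr0. Qed.

Lemma continuous_restrict : continuous (restrict S : 'rV[R]_n -> 'rV[R]_n).
Proof.
move=> f; apply: continuous_at_mx => i l.
have -> : (fun y : 'rV[R]_n => restrict S y i l) =
    (fun y => if l \in S then y 0 l else 0).
  by apply/funext => y; rewrite !mxE.
by case: (l \in S); [exact: coord_continuous | exact: cst_continuous].
Qed.

Lemma Sp_on_normalize_restrict (mu : 'I_n -> R) (p : R) f :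
  0 < p -> (forall i, 0 < mu i) -> restrict S f != 0 ->
  Sp_on mu p S (Sp_normalize mu p (restrict S f)).
Proof.
move=> p0 mu0 rf0; split; first exact: Sp_Sp_normalize.
by move=> i /= iS; rewrite !mxE (negbTE iS) mulr0.
Qed.

End Restriction.

Lemma normrZ_divr_norm_le (R : realType) (V : normedModType R) (a : R) (v : V) :
  `|(a / `|v|) *: v| <= `|a|.
Proof.
have [->|v0] := eqVneq v 0; first by rewrite scaler0 normr0.
by rewrite normrZ normrM normfV normr_id divfK ?normr_eq0.
Qed.

Definition cone_extension (R : realType) (n j : nat) (mu : 'I_n -> R) (p : R)
  (S : {set 'I_n}) (g : 'rV[R]_n -> 'rV[R]_j) (f : 'rV[R]_n) : 'rV[R]_j :=
  (`|restrict S f| / `|g (Sp_normalize mu p (restrict S f))|)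
    *: g (Sp_normalize mu p (restrict S f)).

Section ConeExtension.
Variables (R : realType) (n j : nat) (mu : 'I_n -> R) (p : R) (S : {set 'I_n})
  (g : 'rV[R]_n -> 'rV[R]_j).
Hypotheses (p_gt0 : 0 < p) (mu_gt0 : forall i, 0 < mu i).
Hypothesis g_neq0 : forall f, Sp_on mu p S f -> g f != 0.

Local Notation h f := (Sp_normalize mu p (restrict S f)).
Local Notation F := (cone_extension mu p S g).

Lemma cone_extension_eq0 (f : 'rV[R]_n) : F f = 0 -> restrict S f = 0.
Proof.
apply: contra_eq => rf0; have gh0 := g_neq0 (Sp_on_normalize_restrict p_gt0 mu_gt0 rf0).
by rewrite scaler_eq0 negb_or gh0 andbT mulf_neq0 ?invr_eq0 ?normr_eq0.
Qed.

Lemma cone_extensionN : (forall f, Sp_on mu p S f -> g (- f) = - g f) ->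
  forall f, F (- f) = - F f.
Proof.
move=> g_odd f; rewrite /cone_extension restrictN Sp_normalizeN normrN.
have [->|rf0] := eqVneq (restrict S f) 0; first by rewrite normr0 !mul0r !scale0r oppr0.
by rewrite g_odd ?normrN ?scalerN //; exact: Sp_on_normalize_restrict.
Qed.

Lemma continuous_cone_extension : {within Sp_on mu p S, continuous g} -> continuous F.
Proof.
move=> gc f; have [rf0|rf0] := eqVneq (restrict S f) 0.
  rewrite /prop_for /continuous_at {2}/cone_extension rf0 normr0 mul0r scale0r.
  apply/(@cvgrPdist_lt _ _ _ (nbhs f)) => eps eps0.
  have /cvgrPdist_lt/(_ _ eps0) := @continuous_restrict _ _ S f.
  apply: filterS => y; rewrite rf0 !sub0r !normrN => ry.
  by apply: le_lt_trans (normrZ_divr_norm_le _ _) _; rewrite normr_id.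
have hf := Sp_on_normalize_restrict p_gt0 mu_gt0 rf0.
have hc : {for f, continuous (fun y => h y)}.
  apply: (@continuous_comp _ _ _ (restrict S) (Sp_normalize mu p)).
    exact: continuous_restrict.
  exact: continuous_Sp_normalize.
have h_near : \forall y \near f, Sp_on mu p S (h y).
  have /cvgrPdist_lt/(_ `|restrict S f|) := @continuous_restrict _ _ S f.
  rewrite normr_gt0 => /(_ rf0); apply: filterS => y ry.
  apply: Sp_on_normalize_restrict => //; apply: contraTneq ry => ->.
  by rewrite subr0 ltxx.
have ghc : {for f, continuous (fun y => g (h y))}.
  exact: continuous_at_comp_within hc h_near hf gc.
have normc : {for f, continuous (fun y : 'rV[R]_n => `|restrict S y|)}.
  apply: (@continuous_comp _ _ _ (restrict S) (fun v : 'rV[R]_n => `|v|)).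
    exact: continuous_restrict.
  exact: norm_continuous.
apply: (continuousZ _ ghc); apply: (continuousM normc).
apply: continuousV; first by rewrite normr_eq0 g_neq0.
apply: (@continuous_comp _ _ _ (fun y => g (h y)) (fun v : 'rV[R]_j => `|v|)).
  exact: ghc.
exact: norm_continuous.
Qed.

End ConeExtension.

Lemma genus_ge_Sp_on (R : realType) (n : nat) (mu : 'I_n -> R) (p : R)
  (S : {set 'I_n}) (k : nat) :
  0 < p -> (forall i, 0 < mu i) ->
  genus_ge (~` [set 0] : set 'rV[R]_n) (k + #|~: S|) -> genus_ge (Sp_on mu p S) k.
Proof.
move=> p0 mu0 gX j jk [g [gc [godd gnz]]].
apply: (gX (j + #|~: S|)%N); first by rewrite ltn_add2r.
pose outside (f : 'rV[R]_n) : 'rV[R]_#|~: S| := \row_t f 0 (enum_val t).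
exists (fun f => row_mx (cone_extension mu p S g f) (outside f)); split.
  apply: continuous_subspaceT => f; apply: continuous_at_row_mx.
    exact: continuous_cone_extension.
  apply: continuous_at_mx => i t.
  have -> : (fun y => outside y i t) = (fun y : 'rV[R]_n => y 0 (enum_val t)).
    by apply/funext => y; rewrite mxE.
  exact: coord_continuous.
split=> [f _|f f0].
  rewrite opp_row_mx (cone_extensionN p0 mu0 godd).
  by congr row_mx; apply/rowP => t; rewrite !mxE.
apply/negP; rewrite row_mx_eq0 => /andP[/eqP/(cone_extension_eq0 p0 mu0 gnz) rf0 /eqP fS0].
apply: f0; apply/rowP => i; rewrite mxE.
have [iS|iS] := boolP (i \in S).
  by have := congr1 (fun v : 'rV[R]_n => v 0 i) rf0; rewrite !mxE iS.
have iS' : i \in ~: S by rewrite inE.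
have := congr1 (fun v : 'rV[R]_#|~: S| => v 0 (enum_rank_in iS' i)) fS0.
by rewrite !mxE enum_rankK_in.
Qed.

Lemma independent_card_le_num_zero_Lk (R : realType) (n : nat) (e : rel 'I_n)
  (w : 'I_n -> 'I_n -> R) (sg : {ffun 'I_n * 'I_n -> bool})
  (kappa mu : 'I_n -> R) (S : {set 'I_n}) :
  (forall i j, e i j -> 0 < w i j) -> (forall i, 0 < mu i) -> independent e S ->
  (#|S| <= num_zero_Lk e w sg kappa mu)%N.
Proof.
move=> w_gt0 mu_gt0 indS; set m := #|~: S|.
have Sm : (#|S| + m)%N = n by rewrite cardsC card_ord.
have S_le : (#|S| <= n)%N by rewrite -[X in (_ <= X)%N]Sm leq_addr.
have tm_lt (t : 'I_#|S|) : (t + m < n)%N by rewrite -[X in (_ < X)%N]Sm ltn_add2r.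
pose G k := genus_ge (~` [set 0] : set 'rV[R]_n) k.
pose phi (t : 'I_#|S|) : 'I_n :=
  if asbool (G (t.+1 + m)%N) then widen_ord S_le t else Ordinal (tm_lt t).
have phiZ t : phi t \in [set k : 'I_n | Lk e w sg kappa mu k.+1 == 0].
  rewrite inE /phi; case: ifPn => /asboolP Gt /=; apply/eqP.
    apply: (Lk_eq0_of_genus_ge_Sp_on _ _ w_gt0 mu_gt0 _ indS) => // p p0.
    exact: genus_ge_Sp_on.
  by apply: Lk_eq0_of_not_genus_ge; rewrite -addSn.
have phi_inj : injective phi.
  move=> t1 t2; rewrite /phi.
  case: ifPn => /asboolP G1; case: ifPn => /asboolP G2 /(congr1 val) /= t12;
    apply: val_inj => //.
  - by case: G2; apply: genus_ge_le G1; rewrite t12 addSn ltnS leq_add2r leq_addr.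
  - by case: G1; apply: genus_ge_le G2; rewrite -t12 addSn ltnS leq_add2r leq_addr.
  - by move/eqP: t12; rewrite eqn_add2r => /eqP.
rewrite /num_zero_Lk -[X in (X <= _)%N]card_ord -(card_imset _ phi_inj).
by apply: subset_leq_card; apply/fintype.subsetP => _ /imsetP[t _ ->]; exact: phiZ.
Qed.

Theorem theorem6p2 (R : realType) (n : nat) (e : rel 'I_n)
  (w : 'I_n -> 'I_n -> R) (mu kappa : 'I_n -> R) :
  symmetric e -> irreflexive e ->
  (forall i j, w i j = w j i) ->
  (forall i j, e i j -> 0 < w i j) ->
  (forall i, 0 < mu i) ->
  (indep_number e <=
     \big[minn/n]_(sg : {ffun 'I_n * 'I_n -> bool})
        num_zero_Lk e w sg kappa mu)%N.
Proof.
move=> _ _ _ w_gt0 mu_gt0.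
have [S indS ->] : exists2 S, independent e S & indep_number e = #|S|.
  have [|S indS maxS] := @eq_bigmax_cond _ [pred S | independent e S] (fun S => #|S|).
    by apply/card_gt0P; exists finset.set0; rewrite inE; apply/forallP => i; rewrite inE.
  by exists S; rewrite // -maxS.
elim/big_ind: _ => [|a b Sa Sb|sg _].
- by rewrite -[X in (_ <= X)%N]card_ord max_card.
- by rewrite leq_min Sa Sb.
- exact: independent_card_le_num_zero_Lk.
Qed.
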